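(* There is a ring homomorphism $\lambda\colon\mathrm{B}(\mathcal{R})\to\mathrm{B}(\mathbb{Z})$ such that for every finite connected rack $R$, $$\lambda(b(R))=\sum_{n\geq1}\lambda_n(R)\,c_n,$$ where $\lambda_n(R)$ is the number of $n$-cycles in the cycle decomposition of a left multiplication $\ell_x$ of $R$ (for any $x\in R$; this does not depend on $x$).
   Context: A rack is a set $R$ with a binary operation $\rhd$ such that every left multiplication $\ell_a\colon b\mapsto a\rhd b$ is a bijection and $a\rhd(b\rhd c)=(a\rhd b)\rhd(a\rhd c)$ for all $a,b,c$. The inner automorphism group $\mathrm{Inn}(R)$ is the subgroup of the symmetric group on $R$ generated by all $\ell_a$; a rack is connected if it is non-empty and $\mathrm{Inn}(R)$ acts transitively on $R$. A subrack is a subset $S$ with $\ell_s(S)=S$ for all $s\in S$; a decomposition of $R$ into $S$ and $T$ means $S,T$ are disjoint subracks (possibly empty) with $S\cup T=R$. The Burnside ring of finite racks $\mathrm{B}(\mathcal{R})$ is the abelian group generated by symbols $b(R)$, one for each finite rack $R$, subject to $b(R_1)=b(R_2)$ whenever $R_1\cong R_2$ and $b(R)=b(S)+b(T)$ whenever $R$ decomposes into $S$ and $T$, with ring structure $b(R)b(R')=b(R\times R')$ (cartesian product, componentwise operation). $\mathrm{B}(\mathbb{Z})$ is the Grothendieck ring of isomorphism classes of pairs $(X,\pi)$, $X$ a finite set and $\pi$ a permutation of $X$, with addition from disjoint union and multiplication from cartesian product; $c_n$ denotes the class of an $n$-cycle acting on an $n$-element set. *)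

From HB Require Import structures.
From mathcomp Require Import all_boot fingroup perm action.
Set Implicit Arguments. Unset Strict Implicit. Unset Printing Implicit Defensive.

Record finRack := FinRack {
  rk_car :> finType;
  rk_op : rk_car -> rk_car -> rk_car;
  rk_bij : forall a, bijective (rk_op a);
  rk_sd : forall a b c, rk_op a (rk_op b c) = rk_op (rk_op a b) (rk_op a c)
}.

Definition lperm (R : finRack) (a : R) : {perm R} := perm (bij_inj (rk_bij a)).

Definition Inn (R : finRack) : {group {perm R}} := <<[set lperm a | a : R]>>%G.

Definition connected (R : finRack) : Prop :=
  0 < #|R| /\ [transitive Inn R, on [set: R] | 'P].

Definition rack_hom (R S : finRack) (f : R -> S) : Prop :=
  forall a b, f (rk_op a b) = rk_op (f a) (f b).

Definition rack_iso (R S : finRack) : Prop :=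
  exists f : R -> S, rack_hom f /\ bijective f.

(* R decomposes into (copies of) S and T: S and T embed as rack
   morphisms whose images are disjoint and cover R (the images are then
   exactly a pair of disjoint subracks with union R, up to isomorphism). *)
Definition decomposes (R S T : finRack) : Prop :=
  exists (i : S -> R) (j : T -> R),
    [/\ rack_hom i /\ injective i, rack_hom j /\ injective j,
        [disjoint codom i & codom j] &
        forall x : R, x \in codom i \/ x \in codom j].

Lemma prod_rack_bij (R S : finRack) (a : R * S) :
  bijective (fun b : R * S => (rk_op a.1 b.1, rk_op a.2 b.2)).
Proof.
case: (rk_bij a.1) => g1 h1 k1; case: (rk_bij a.2) => g2 h2 k2.
exists (fun b : R * S => (g1 b.1, g2 b.2)).
  by move=> -[x y] /=; rewrite h1 h2.
by move=> -[x y] /=; rewrite k1 k2.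
Qed.

Lemma prod_rack_sd (R S : finRack) (a b c : R * S) :
  (rk_op a.1 (rk_op b.1 c.1), rk_op a.2 (rk_op b.2 c.2)) =
  (rk_op (rk_op a.1 b.1) (rk_op a.1 c.1), rk_op (rk_op a.2 b.2) (rk_op a.2 c.2)).
Proof. by congr pair; apply: rk_sd. Qed.

Definition prod_rack (R S : finRack) : finRack :=
  @FinRack (R * S)%type (fun a b => (rk_op a.1 b.1, rk_op a.2 b.2))
    (@prod_rack_bij R S) (@prod_rack_sd R S).

Definition pt_rack : finRack :=
  @FinRack unit (fun _ b => b) (fun _ => (@Bijective _ _ id id (fun _ => erefl) (fun _ => erefl)))
    (fun _ _ _ => erefl).

(*  B(Z): Grothendieck ring of finite sets with a permutation           *)

Record permSet := PermSet { ps_car : finType; ps_perm : {perm ps_car} }.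

Definition ps_iso (X Y : permSet) : Prop :=
  exists h : ps_car X -> ps_car Y,
    bijective h /\ forall x, h (ps_perm X x) = ps_perm Y (h x).

Definition sum_fun (A B : Type) (f : A -> A) (g : B -> B) (x : A + B) : A + B :=
  match x with inl a => inl (f a) | inr b => inr (g b) end.

Lemma sum_fun_inj (A B : Type) (f : A -> A) (g : B -> B) :
  injective f -> injective g -> injective (sum_fun f g).
Proof. by move=> fi gi [a|b] [a'|b'] //= [] => [/fi|/gi] ->. Qed.

Definition prod_fun (A B : Type) (f : A -> A) (g : B -> B) (x : A * B) : A * B :=
  (f x.1, g x.2).

Lemma prod_fun_inj (A B : Type) (f : A -> A) (g : B -> B) :
  injective f -> injective g -> injective (prod_fun f g).
Proof. by move=> fi gi [a b] [a' b'] [] /fi -> /gi ->. Qed.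

Definition ps_add (X Y : permSet) : permSet :=
  @PermSet (ps_car X + ps_car Y)%type
    (perm (sum_fun_inj (@perm_inj _ (ps_perm X)) (@perm_inj _ (ps_perm Y)))).

Definition ps_mul (X Y : permSet) : permSet :=
  @PermSet (ps_car X * ps_car Y)%type
    (perm (prod_fun_inj (@perm_inj _ (ps_perm X)) (@perm_inj _ (ps_perm Y)))).

Definition ps_empty : permSet := @PermSet void 1%g.
Definition ps_point : permSet := @PermSet unit 1%g.

Definition ps_cycle (n : nat) : permSet := @PermSet 'I_n (perm (@ordS_inj n)).

(* Elements of B(Z) are formal differences [X] - [Y]. *)
Definition BZ := (permSet * permSet)%type.

(* Grothendieck equality: [X]-[Y] = [X']-[Y'] iff X+Y'+Z ~ X'+Y+Z for some Z *)
Definition bz_eq (u v : BZ) : Prop :=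
  exists Z : permSet,
    ps_iso (ps_add (ps_add u.1 v.2) Z) (ps_add (ps_add v.1 u.2) Z).

Definition bz_add (u v : BZ) : BZ := (ps_add u.1 v.1, ps_add u.2 v.2).
Definition bz_mul (u v : BZ) : BZ :=
  (ps_add (ps_mul u.1 v.1) (ps_mul u.2 v.2), ps_add (ps_mul u.1 v.2) (ps_mul u.2 v.1)).
Definition bz_zero : BZ := (ps_empty, ps_empty).
Definition bz_one : BZ := (ps_point, ps_empty).
Definition bz_c (n : nat) : BZ := (ps_cycle n, ps_empty).

(* B(R) is presented by generators b(R) and relations; a ring
   homomorphism out of it is (by the presentation) exactly an assignment
   R |-> lam R on generators compatible with the relations, with
   lam (R x R') = lam R * lam R' and lam (1-point rack) = 1.  Here
   lam R is a representative in BZ of the image of b(R). *)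
Definition rack_burnside_ring_hom (lam : finRack -> BZ) : Prop :=
  [/\ (forall R1 R2 : finRack, rack_iso R1 R2 -> bz_eq (lam R1) (lam R2)),
      (forall R S T : finRack, decomposes R S T ->
         bz_eq (lam R) (bz_add (lam S) (lam T))),
      (forall R R' : finRack, bz_eq (lam (prod_rack R R')) (bz_mul (lam R) (lam R'))) &
      bz_eq (lam pt_rack) bz_one].

Definition lambda_n (R : finRack) (x : R) (n : nat) : nat :=
  #|[set c in porbits (lperm x) | #|c| == n]|.

(* sum_{n >= 1} lambda_n(R) c_n  (terms with n > #|R| vanish) *)
Definition cycle_term (R : finRack) (x : R) (n : nat) : BZ :=
  iter (lambda_n x n) (bz_add (bz_c n)) bz_zero.
Definition cycle_sum (R : finRack) (x : R) : BZ :=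
  \big[bz_add/bz_zero]_(1 <= n < (#|R|).+1) cycle_term x n.

(* A finite rack R is partitioned into its connected components, the maximal
   subsets C on which the group generated by the l_c (c in C) acts
   transitively.  Choosing a point r_C in every component, lambda(R) is the
   set R permuted by l_(r_C) on each C.  Another choice is g r_C for an inner
   automorphism g of C, which conjugates l_(r_C) into l_(g r_C) and maps C
   onto itself; so lambda(R) does not depend on the choice.  This gives
   invariance under isomorphism and additivity on decompositions, and
   identifies lambda(R) with (R, l_x) for connected R.  A component of
   R1 x R2 lies in a product C1 x C2 of components, whose inner group maps
   every component inside C1 x C2 onto itself; as l_a x 1 and 1 x l_b then
   act on these components like l_x1 x 1 and its inverse, each of them
   contains a point (l_x1^i x1, x2), whose left multiplication is
   l_x1 x l_x2.  Hence lambda is multiplicative.  Permutation sets are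
   compared through the number of points on n-cycles, which determines them
   up to isomorphism. *)

From HB Require Import structures.
From mathcomp Require Import all_boot fingroup perm action.
Set Implicit Arguments. Unset Strict Implicit. Unset Printing Implicit Defensive.

Local Open Scope group_scope.

(** * Permutation sets up to isomorphism *)

Section PermOrbits.
Variables (T : finType) (s : {perm T}).
Implicit Types (x z : T) (A : {set T}).

Lemma expg_porbit_eq x i j :
  ((s ^+ i) x == (s ^+ j) x) = (i == j %[mod #|porbit s x|]).
Proof.
set n := #|porbit s x|; have n_gt0 : (0 < n)%N by rewrite lt0n card_porbit_neq0.
have iter_mod k : iter k s x = iter (k %% n) s x.
  rewrite {1}(divn_eq k n) addnC iterD iterM.
  by rewrite [iter (_ %/ _) _ _]iter_fix // iter_porbit.
rewrite !permX iter_mod [iter j _ _]iter_mod -!(nth_traject s (ltn_pmod _ n_gt0)).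
by rewrite nth_uniq ?size_traject ?ltn_pmod ?uniq_traject_porbit.
Qed.

Lemma porbitS x z : (s z \in porbit s x) = (z \in porbit s x).
Proof. by rewrite -!eq_porbit_mem -(porbit_perm s 1 z) expg1. Qed.

Lemma porbit_stable A x :
  (forall z, z \in A -> s z \in A) -> x \in A -> porbit s x \subset A.
Proof.
move=> sA xA; apply/subsetP => _ /porbitP[i ->]; rewrite permX.
by elim: i => //= i IH; apply: sA.
Qed.

Lemma porbit_split A x :
  (forall z, z \in A -> s z \in A) -> x \in A ->
  [/\ A = porbit s x :|: (A :\: porbit s x), [disjoint porbit s x & A :\: porbit s x]
    & forall z, z \in A :\: porbit s x -> s z \in A :\: porbit s x].
Proof.
move=> sA xA; split.
- by rewrite -{1}(setID A (porbit s x)) (setIidPr (porbit_stable sA xA)).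
- by rewrite disjoint_sym disjoints_subset setDE subsetIr.
- by move=> z; rewrite !inE porbitS => /andP[-> /sA].
Qed.

Definition cycle_count A n := #|[set z in A | #|porbit s z| == n]|.

Lemma cycle_count0 n : cycle_count set0 n = 0%N.
Proof. by rewrite /cycle_count setIdE set0I cards0. Qed.

Lemma cycle_count_gt0 A z : z \in A -> (0 < cycle_count A #|porbit s z|)%N.
Proof. by move=> zA; rewrite card_gt0; apply/set0Pn; exists z; rewrite !inE zA eqxx. Qed.

Lemma cycle_count_setU A1 A2 n : [disjoint A1 & A2] ->
  cycle_count (A1 :|: A2) n = (cycle_count A1 n + cycle_count A2 n)%N.
Proof.
move/disjoint_setI0 => A12; rewrite /cycle_count !setIdE setIUl cardsU.
by rewrite setIACA A12 set0I cards0 subn0.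
Qed.

Lemma cycle_count_porbit x n :
  cycle_count (porbit s x) n = if #|porbit s x| == n then #|porbit s x| else 0%N.
Proof.
rewrite /cycle_count; have -> : [set z in porbit s x | #|porbit s z| == n] =
                               [set z in porbit s x | #|porbit s x| == n].
  apply/setP => z; rewrite !inE; apply: andb_id2l.
  by rewrite -eq_porbit_mem => /eqP ->.
by case: eqP => _; rewrite ?setIdE ?setIT ?setI0 ?cards0.
Qed.

End PermOrbits.

Section EquivariantMaps.
Variables (X Y : finType) (s : {perm X}) (t : {perm Y}) (h : X -> Y).
Hypothesis hC : forall z, h (s z) = t (h z).

Lemma equiv_expg i z : h ((s ^+ i) z) = (t ^+ i) (h z).
Proof. by rewrite !permX; elim: i => //= i IH; rewrite hC IH. Qed.

Lemma porbit_equiv z : porbit t (h z) = h @: porbit s z.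
Proof.
apply/setP => w; apply/porbitP/imsetP => [[i ->]|[v /porbitP[i ->] ->]].
  by exists ((s ^+ i) z); rewrite ?mem_porbit ?equiv_expg.
by exists i; rewrite equiv_expg.
Qed.

Lemma card_porbit_equiv z : injective h -> #|porbit t (h z)| = #|porbit s z|.
Proof. by move=> h_inj; rewrite porbit_equiv card_imset. Qed.

End EquivariantMaps.

Section Classification.
Variables (X Y : finType) (s : {perm X}) (t : {perm Y}).

Definition equiv_bij_on (A : {set X}) (B : {set Y}) (h : X -> Y) :=
  [/\ {in A &, injective h}, h @: A = B & {in A, forall z, h (s z) = t (h z)}].

Lemma equiv_bij_on_porbit x y : #|porbit s x| = #|porbit t y| ->
  exists h, equiv_bij_on (porbit s x) (porbit t y) h.
Proof.
move=> eq_n; pose h z := (t ^+ index z (traject s x #|porbit s x|)) y.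
have hE i : h ((s ^+ i) x) = (t ^+ i) y.
  have sx_traj : (s ^+ i) x \in traject s x #|porbit s x|.
    by rewrite -porbit_traject mem_porbit.
  have k_lt : (index ((s ^+ i) x) (traject s x #|porbit s x|) < #|porbit s x|)%N.
    by rewrite -[X in (_ < X)%N](size_traject s x) index_mem.
  apply/eqP; rewrite expg_porbit_eq -eq_n -expg_porbit_eq permX.
  by rewrite -(nth_traject s k_lt) nth_index.
exists h; split.
- move=> _ _ /porbitP[i ->] /porbitP[j ->]; rewrite !hE => /eqP.
  by rewrite expg_porbit_eq -eq_n -expg_porbit_eq => /eqP.
- apply/setP => w; apply/imsetP/porbitP => [[_ /porbitP[i ->] ->]|[i ->]].
    by exists i; rewrite hE.
  by exists ((s ^+ i) x); rewrite ?mem_porbit ?hE.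
- by move=> _ /porbitP[i ->]; rewrite -permM -expgSr !hE expgSr permM.
Qed.

Lemma equiv_bij_on_setU (A1 A2 : {set X}) (B1 B2 : {set Y}) (h1 h2 : X -> Y) :
  (forall z, (s z \in A1) = (z \in A1)) ->
  [disjoint A1 & A2] -> [disjoint B1 & B2] ->
  equiv_bij_on A1 B1 h1 -> equiv_bij_on A2 B2 h2 ->
  equiv_bij_on (A1 :|: A2) (B1 :|: B2) (fun z => if z \in A1 then h1 z else h2 z).
Proof.
move=> sA1 dA dB [inj1 im1 eq1] [inj2 im2 eq2].
have A2A1 z : z \in A2 -> (z \in A1) = false by apply: (disjointFl dA).
have hB1 z : z \in A1 -> h1 z \in B1 by move=> zA1; rewrite -im1 imset_f.
have hB2 z : z \in A2 -> (h2 z \in B1) = false.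
  by move=> zA2; apply: (disjointFl dB); rewrite -im2 imset_f.
split.
- move=> z1 z2 /setUP[z1A|z1A] /setUP[z2A|z2A].
  + by rewrite z1A z2A; apply: inj1.
  + by rewrite z1A A2A1 // => E; move: (hB1 _ z1A); rewrite E hB2.
  + by rewrite z2A A2A1 // => E; move: (hB1 _ z2A); rewrite -E hB2.
  + by rewrite !A2A1 //; apply: inj2.
- rewrite imsetU -im1 -im2; congr (_ :|: _); apply: eq_in_imset => z zA.
    by rewrite zA.
  by rewrite A2A1.
- move=> z /setUP[zA|zA]; first by rewrite sA1 zA eq1.
  by rewrite sA1 !A2A1 ?eq2.
Qed.

Lemma equiv_bij_on_cycle_count (y0 : Y) (A : {set X}) (B : {set Y}) :
  (forall z, z \in A -> s z \in A) -> (forall z, z \in B -> t z \in B) ->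
  (forall n, cycle_count s A n = cycle_count t B n) -> exists h, equiv_bij_on A B h.
Proof.
elim: {A}_.+1 {-2}A (ltnSn #|A|) B => // N IH A A_lt B sA tB eq_count.
have [A0|[x xA]] := set_0Vmem A.
  have B0 : B = set0.
    apply/setP => y; rewrite inE; apply/negbTE/negP => /(cycle_count_gt0 t).
    by rewrite -eq_count A0 cycle_count0.
  by exists (fun=> y0); split; rewrite ?A0 ?B0 ?imset0 // => z; rewrite inE.
have [y yB eq_n] : exists2 y, y \in B & #|porbit t y| = #|porbit s x|.
  move: (cycle_count_gt0 s xA); rewrite eq_count card_gt0 => /set0Pn[y].
  by rewrite inE => /andP[yB /eqP]; exists y.
have [EA dA sA'] := porbit_split sA xA; have [EB dB tB'] := porbit_split tB yB.
have [h1 h1E] := equiv_bij_on_porbit (esym eq_n).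
have A'_lt : (#|A :\: porbit s x| < N)%N.
  rewrite -ltnS (leq_trans _ A_lt) // ltnS cardsD (setIidPr (porbit_stable sA xA)).
  by rewrite ltn_subrL lt0n card_porbit_neq0 card_gt0; apply/set0Pn; exists x.
have eq_count' n :
    cycle_count s (A :\: porbit s x) n = cycle_count t (B :\: porbit t y) n.
  apply/eqP; rewrite -(eqn_add2l (cycle_count s (porbit s x) n)).
  rewrite -cycle_count_setU // -EA eq_count [in cycle_count t B _]EB.
  by rewrite cycle_count_setU // !cycle_count_porbit eq_n.
have [h' h'E] := IH _ A'_lt _ sA' tB' eq_count'.
exists (fun z => if z \in porbit s x then h1 z else h' z).
by rewrite EA EB; apply: equiv_bij_on_setU => // z; apply: porbitS.
Qed.

End Classification.

Definition ps_count (X : permSet) n := cycle_count (ps_perm X) setT n.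

Lemma ps_count_card0 (X : permSet) n : #|ps_car X| = 0%N -> ps_count X n = 0%N.
Proof. by move=> X0; apply/eqP; rewrite -leqn0 -X0 max_card. Qed.

Lemma ps_count_empty n : ps_count ps_empty n = 0%N.
Proof. by rewrite ps_count_card0 ?card_void. Qed.

Lemma ps_count_mul0r (X : permSet) n : ps_count (ps_mul X ps_empty) n = 0%N.
Proof. by rewrite ps_count_card0 //= card_prod card_void muln0. Qed.

Lemma ps_count_mul0l (X : permSet) n : ps_count (ps_mul ps_empty X) n = 0%N.
Proof. by rewrite ps_count_card0 //= card_prod card_void. Qed.

Lemma ps_count_iso (X Y : permSet) n : ps_iso X Y -> ps_count X n = ps_count Y n.
Proof.
case=> h [h_bij hC]; have [g hK gK] := h_bij; have h_inj := bij_inj h_bij.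
rewrite /ps_count /cycle_count -(card_imset _ h_inj); congr #|pred_of_set _|.
apply/setP => y; rewrite !inE; apply/imsetP/idP => [[x]|yn].
  by rewrite !inE => xn ->; rewrite (card_porbit_equiv hC _ h_inj).
by exists (g y); rewrite ?gK // !inE -(card_porbit_equiv hC _ h_inj) gK.
Qed.

Lemma ps_iso_count (X Y : permSet) :
  (forall n, ps_count X n = ps_count Y n) -> ps_iso X Y.
Proof.
move=> eq_count; have [Y0|[y0 _]] := set_0Vmem [set: ps_car Y].
  have noX (x : ps_car X) : False.
    have := cycle_count_gt0 (ps_perm X) (in_setT x).
    by rewrite -/(ps_count X _) eq_count /ps_count Y0 cycle_count0.
  have noY (y : ps_car Y) : False by move: (in_setT y); rewrite Y0 inE.
  exists (fun x => match noX x with end); split=> [|x]; last by case: (noX x).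
  by exists (fun y => match noY y with end) => [x|y]; [case: (noX x) | case: (noY y)].
have [||h [h_inj h_im hC]] := equiv_bij_on_cycle_count y0 _ _ eq_count.
- by move=> x; rewrite in_setT.
- by move=> y; rewrite in_setT.
exists h; split=> [|x]; last by rewrite hC ?in_setT.
apply: inj_card_bij => [x1 x2|]; first by apply: h_inj; rewrite in_setT.
by rewrite -cardsT -h_im (leq_trans (leq_imset_card _ _)) ?max_card.
Qed.

Lemma ps_count_add (X Y : permSet) n :
  ps_count (ps_add X Y) n = (ps_count X n + ps_count Y n)%N.
Proof.
have inlC x : inl (ps_perm X x) = ps_perm (ps_add X Y) (inl x) by rewrite permE.
have inrC y : inr (ps_perm Y y) = ps_perm (ps_add X Y) (inr y) by rewrite permE.
have inl_inj : injective (@inl (ps_car X) (ps_car Y)) by move=> ? ? [].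
have inr_inj : injective (@inr (ps_car X) (ps_car Y)) by move=> ? ? [].
rewrite /ps_count /cycle_count -!sum1_card big_sumType /=.
congr (_ + _)%N; apply: eq_bigl => z; rewrite !inE.
  by rewrite (card_porbit_equiv inlC _ inl_inj).
by rewrite (card_porbit_equiv inrC _ inr_inj).
Qed.

Lemma ps_count_cycle m n : ps_count (ps_cycle m) n = if m == n then m else 0%N.
Proof.
case: m => [|m]; first by rewrite ps_count_card0 ?card_ord //; case: ifP.
have iter_ordS k (z : 'I_m.+1) : val (iter k (@ordS m.+1) z) = ((z + k) %% m.+1)%N.
  elim: k => [|k IH] /=; first by rewrite addn0 modn_small.
  by rewrite IH -addn1 modnDml addnS addn0 addnS.
have porbitT (z : 'I_m.+1) : porbit (ps_perm (ps_cycle m.+1)) z = setT.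
  apply/setP => w; rewrite inE; apply/porbitP; exists (w + m.+1 - z)%N.
  apply: val_inj; rewrite permX /= (eq_iter (fun v => permE _ v)) iter_ordS.
  rewrite subnKC; last by rewrite (leq_trans (ltnW (ltn_ord z))) ?leq_addl.
  by rewrite modnDr modn_small.
rewrite /ps_count /cycle_count; under eq_finset do rewrite porbitT cardsT card_ord.
by case: eqP => _; rewrite setIdE ?setIT ?setI0 ?cardsT ?card_ord ?cards0.
Qed.

Lemma bz_eq_count (u v : BZ) :
  (forall n, ps_count u.1 n + ps_count v.2 n = ps_count v.1 n + ps_count u.2 n)%N ->
  bz_eq u v.
Proof.
move=> eq_count; exists ps_empty; apply: ps_iso_count => n.
by rewrite !ps_count_add eq_count.
Qed.

(** * Connected components of a rack *)

Lemma sub_cofixset (T : finType) (F : {set T} -> {set T}) (A : {set T}) :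
  {homo F : B C / B \subset C} -> A \subset F A -> A \subset cofixset F.
Proof.
move=> F_mono AF; rewrite /cofixset /fixset subsetC.
elim: #|T| => [|k IH] /=; first by rewrite sub0set.
by rewrite /funsetC setCS (subset_trans AF) // F_mono // subsetC.
Qed.

Lemma orbit_gen_sub (T : finType) (X : {set {perm T}}) (S : {set T}) y :
  (forall g z, g \in X -> z \in S -> g z \in S) -> y \in S ->
  orbit 'P <<X>> y \subset S.
Proof.
move=> XS yS; rewrite acts_sub_orbit // gen_subG.
by apply/subsetP => g gX; rewrite !inE; apply/subsetP => z zS; rewrite inE /= XS.
Qed.

Lemma orbit_perm_act (T : finType) (G : {group {perm T}}) g y z :
  g \in G -> (g z \in orbit 'P G y) = (z \in orbit 'P G y).
Proof. exact: orbit_actr. Qed.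

Section InnerGroups.
Variable R : finRack.
Implicit Types (a b y z : R) (g : {perm R}) (A B : {set R}).

Lemma lpermE a b : lperm a b = rk_op a b.
Proof. by rewrite permE. Qed.

Definition rack_aut : {set {perm R}} :=
  [set g : {perm R} | [forall a, [forall b, g (rk_op a b) == rk_op (g a) (g b)]]].

Lemma rack_autP g : reflect (rack_hom g) (g \in rack_aut).
Proof.
rewrite inE; apply: (iffP forallP) => [g_hom a b|g_hom a].
  by apply/eqP; move/forallP: (g_hom a).
by apply/forallP => b; rewrite g_hom.
Qed.

Lemma rack_aut_group_set : group_set rack_aut.
Proof.
apply/group_setP; split; first by apply/rack_autP => a b; rewrite !perm1.
move=> g h /rack_autP g_hom /rack_autP h_hom.
by apply/rack_autP => a b; rewrite !permM g_hom h_hom.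
Qed.
Canonical rack_aut_group := group rack_aut_group_set.

Lemma lperm_aut a : lperm a \in rack_aut.
Proof. by apply/rack_autP => b c; rewrite !lpermE rk_sd. Qed.

Lemma lperm_aut_conj g a : g \in rack_aut -> lperm (g a) = lperm a ^ g.
Proof.
move/rack_autP => g_hom; apply/permP => z.
by rewrite conjgE !permM lpermE -[in LHS](permKV g z) -g_hom lpermE.
Qed.

Lemma lperm_cycle g a : g \in <[lperm a]> -> lperm (g a) = lperm a.
Proof.
move=> g_a; have g_aut : g \in rack_aut.
  by apply: subsetP g_a; rewrite cycle_subG lperm_aut.
rewrite lperm_aut_conj // conjgE; case/cycleP: g_a => i ->.
by rewrite (commuteX i (commute_refl _)) mulKg.
Qed.

Definition inn A : {group {perm R}} := <<[set lperm a | a in A]>>%G.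

Lemma lperm_inn A a : a \in A -> lperm a \in inn A.
Proof. by move=> aA; apply: mem_gen; apply: imset_f. Qed.

Lemma inn_aut A : inn A \subset rack_aut.
Proof. by rewrite gen_subG; apply/subsetP => _ /imsetP[a _ ->]; apply: lperm_aut. Qed.

Lemma innS A B : A \subset B -> inn A \subset inn B.
Proof. by move=> AB; apply: genS; apply: imsetS. Qed.

Lemma inn_setT : inn setT = Inn R.
Proof.
by apply: val_inj; congr <<_>>; apply/setP => g; apply/imsetP/imsetP => -[a _ ->]; exists a.
Qed.

Lemma orbit_innS A B y : A \subset B -> orbit 'P (inn A) y \subset orbit 'P (inn B) y.
Proof. by move/innS; apply: imsetS. Qed.

Lemma orbit_inn_sub A (S : {set R}) y :
  (forall a z, a \in A -> z \in S -> lperm a z \in S) -> y \in S ->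
  orbit 'P (inn A) y \subset S.
Proof. by move=> AS; apply: orbit_gen_sub => _ z /imsetP[a aA ->]; apply: AS. Qed.

End InnerGroups.

(* The component of y is the greatest A with A = orbit of y under inn A, that
   is, the largest set containing y on which its own inner group acts
   transitively. *)
HB.lock Definition component (R : finRack) (y : R) : {set R} :=
  cofixset (fun A => orbit 'P (inn A) y).

Section Components.
Variable R : finRack.
Implicit Types (a y z : R) (g : {perm R}) (A : {set R}).

Lemma component_orbit y : orbit 'P (inn (component y)) y = component y.
Proof. by rewrite component.unlock; apply: cofixsetK => A B; apply: orbit_innS. Qed.

Lemma mem_component y : y \in component y.
Proof. by rewrite -component_orbit orbit_refl. Qed.

Lemma sub_component y A : A \subset orbit 'P (inn A) y -> A \subset component y.
Proof. by rewrite component.unlock; apply: sub_cofixset => B C; apply: orbit_innS. Qed.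

Lemma component_orbitE y z :
  z \in component y -> orbit 'P (inn (component y)) z = component y.
Proof. by rewrite -{1 3}component_orbit => /orbit_eqP. Qed.

Lemma component_eq y z : z \in component y -> component z = component y.
Proof.
move=> zy; have yz : component y \subset component z.
  by apply: sub_component; rewrite component_orbitE.
apply/eqP; rewrite eqEsubset yz andbT sub_component //.
by rewrite component_orbitE // (subsetP yz) ?mem_component.
Qed.

Lemma component_inn y g z :
  g \in inn (component y) -> z \in component y -> g z \in component y.
Proof. by move=> g_inn /component_orbitE <-; apply: (mem_orbit 'P z g_inn). Qed.

Lemma component_lperm y a z :
  a \in component y -> z \in component y -> lperm a z \in component y.
Proof. by move/lperm_inn; apply: component_inn. Qed.

Lemma component_lpermE y a : a \in component y -> component (lperm a y) = component y.
Proof. by move=> ay; apply: component_eq; rewrite component_lperm ?mem_component. Qed.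

Lemma component_connected y : connected R -> component y = setT.
Proof.
case=> _ R_trans; apply/eqP; rewrite eqEsubset subsetT sub_component // inn_setT.
by rewrite (atransP R_trans) ?inE.
Qed.

End Components.

Section ComponentsUnderMorphisms.
Variables (R S : finRack) (f : R -> S).
Hypothesis f_hom : rack_hom f.

Lemma orbit_inn_hom (A : {set R}) y :
  orbit 'P (inn (f @: A)) (f y) = f @: orbit 'P (inn A) y.
Proof.
apply/eqP; rewrite eqEsubset; apply/andP; split.
  apply: orbit_inn_sub => [_ _ /imsetP[a aA ->] /imsetP[z zO ->]|].
    by rewrite lpermE -f_hom -lpermE imset_f // orbit_perm_act ?lperm_inn.
  by rewrite imset_f ?orbit_refl.
suff : orbit 'P (inn A) y \subset f @^-1: orbit 'P (inn (f @: A)) (f y).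
  by move=> sub; apply/subsetP => _ /imsetP[z /(subsetP sub) + ->]; rewrite inE.
apply: orbit_inn_sub => [a z aA|]; last by rewrite inE orbit_refl.
by rewrite !inE lpermE f_hom -lpermE orbit_perm_act // lperm_inn ?imset_f.
Qed.

Lemma component_hom y : f @: component y \subset component (f y).
Proof. by apply: sub_component; rewrite orbit_inn_hom component_orbit. Qed.

Lemma component_hom_inj y :
  injective f -> (forall a z, lperm a (f z) \in codom f) ->
  component (f y) = f @: component y.
Proof.
move=> f_inj f_closed; apply/eqP; rewrite eqEsubset component_hom andbT.
have C_codom : component (f y) \subset [set c | c \in codom f].
  rewrite -component_orbit; apply: orbit_inn_sub => [a z _|]; rewrite inE ?codom_f //.
  by move=> /codomP[x ->]; rewrite inE f_closed.
set B := f @^-1: component (f y).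
have EB : f @: B = component (f y).
  apply/setP => c; apply/imsetP/idP => [[z]|cC]; first by rewrite inE => ? ->.
  by have /[!inE] /codomP[z Ez] := subsetP C_codom c cC; exists z; rewrite // inE -Ez.
rewrite -EB imsetS // sub_component //; apply/subsetP => z zB.
by rewrite -(mem_imset _ _ f_inj) -orbit_inn_hom EB component_orbit -EB imset_f.
Qed.

Lemma component_iso y : bijective f -> component (f y) = f @: component y.
Proof.
case=> g fK gK; apply: component_hom_inj => [|a z]; first exact: can_inj fK.
by rewrite -[lperm a (f z)]gK codom_f.
Qed.

End ComponentsUnderMorphisms.

Lemma component_aut (R : finRack) (g : {perm R}) y :
  g \in rack_aut R -> component (g y) = g @: component y.
Proof.
by move/rack_autP => g_hom; apply: component_iso => //; apply: (injF_bij (@perm_inj _ g)).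
Qed.

Lemma decomposition_lperm_closed (R S T : finRack) (i : S -> R) (j : T -> R) :
  rack_hom i -> rack_hom j -> [disjoint codom i & codom j] ->
  (forall x, x \in codom i \/ x \in codom j) ->
  forall a z, lperm a (i z) \in codom i.
Proof.
move=> i_hom j_hom ij_disj ij_cover a z.
case: (ij_cover a) => /codomP[b ->]; first by rewrite lpermE -i_hom codom_f.
case: (ij_cover (lperm (j b) (i z))) => // /codomP[t Et].
have E : i z = j ((lperm b)^-1 t).
  by apply: (@perm_inj _ (lperm (j b))); rewrite Et lpermE -j_hom -lpermE permKV.
by have := disjointFr ij_disj (codom_f i z); rewrite E codom_f.
Qed.

(** * The permutation set lambda(R) *)

Section Lambda.
Variable R : finRack.
Implicit Types (a y z : R).

Definition component_rep y : R := odflt y [pick z in component y].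

Lemma component_rep_in y : component_rep y \in component y.
Proof. by rewrite /component_rep; case: pickP => [//|/(_ y)]; rewrite /= mem_component. Qed.

Lemma eq_component_rep y z :
  component y = component z -> component_rep y = component_rep z.
Proof.
move=> Eyz; rewrite /component_rep Eyz; case: pickP => [//|/(_ z)].
by rewrite /= mem_component.
Qed.

Lemma lambda_fun_inj : injective (fun y => lperm (component_rep y) y).
Proof.
move=> y z /= Eyz; have Eyz_comp : component y = component z.
  rewrite -[LHS](component_lpermE (component_rep_in y)) Eyz.
  by rewrite component_lpermE ?component_rep_in.
by move: Eyz; rewrite (eq_component_rep Eyz_comp) => /perm_inj.
Qed.

Definition lambda_perm : {perm R} := perm lambda_fun_inj.

Lemma lambda_permE y : lambda_perm y = lperm (component_rep y) y.
Proof. by rewrite permE. Qed.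

Lemma ps_iso_lambda (X : permSet) (F r : ps_car X -> R) :
  bijective F ->
  (forall w, r w \in component (F w)) ->
  (forall w1 w2, component (F w1) = component (F w2) -> r w1 = r w2) ->
  (forall w, F (ps_perm X w) = lperm (r w) (F w)) ->
  ps_iso X (PermSet lambda_perm).
Proof.
move=> F_bij r_in r_const FC.
(* k w is an inner automorphism of the component of F w moving r w to its
   chosen representative; it conjugates l_(r w) into l_(component_rep (F w)). *)
pose k w := odflt 1 [pick g in inn (component (F w)) | g (r w) == component_rep (F w)].
have kP w : k w \in inn (component (F w)) /\ k w (r w) = component_rep (F w).
  rewrite /k; case: pickP => [g /andP[? /eqP] //|none].
  have : component_rep (F w) \in orbit 'P (inn (component (F w))) (r w).
    by rewrite component_orbitE ?component_rep_in.
  by case/orbitP => g g_inn Eg; have := none g; rewrite g_inn -Eg eqxx.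
have k_const w1 w2 : component (F w1) = component (F w2) -> k w1 = k w2.
  by move=> E; rewrite /k (r_const _ _ E) (eq_component_rep E) E.
pose H w := k w (F w).
have H_comp w : component (H w) = component (F w).
  by apply: component_eq; apply: component_inn (kP w).1 (mem_component _).
have H_inj : injective H.
  move=> w1 w2 E; have E' : component (F w1) = component (F w2) by rewrite -!H_comp E.
  by move: E; rewrite /H (k_const _ _ E') => /perm_inj /(bij_inj F_bij).
exists H; split; first by apply: (inj_card_bij H_inj); rewrite (bij_eq_card F_bij).
move=> w /=; rewrite lambda_permE (eq_component_rep (H_comp w)) -(kP w).2.
have Ecomp : component (F (ps_perm X w)) = component (F w) by rewrite FC component_lpermE.
have /rack_autP k_hom := subsetP (inn_aut _) _ (kP w).1.
by rewrite /H (k_const _ _ Ecomp) FC !lpermE k_hom.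
Qed.

End Lambda.

Definition rack_lambda (R : finRack) : BZ := (PermSet (lambda_perm R), ps_empty).

Lemma rack_lambda_iso (R1 R2 : finRack) :
  rack_iso R1 R2 -> ps_iso (PermSet (lambda_perm R1)) (PermSet (lambda_perm R2)).
Proof.
case=> f [f_hom f_bij]; have Ef w := component_iso f_hom w f_bij.
apply: (@ps_iso_lambda _ (PermSet _) f (fun w => f (component_rep w))) => // [w|w1 w2|w].
- by rewrite Ef imset_f ?component_rep_in.
- by rewrite !Ef => /(imset_inj (bij_inj f_bij))/eq_component_rep ->.
- by rewrite /= lambda_permE !lpermE f_hom.
Qed.

Lemma sum_codom_bij (R S T : finType) (i : S -> R) (j : T -> R) :
  injective i -> injective j -> [disjoint codom i & codom j] ->
  (forall x, x \in codom i \/ x \in codom j) ->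
  bijective (fun w => match w with inl s => i s | inr t => j t end).
Proof.
move=> i_inj j_inj ij_disj ij_cover; set F := fun w => _.
have ij_neq s t : i s <> j t.
  by move=> E; have := disjointFr ij_disj (codom_f i s); rewrite E codom_f.
have F_inj : injective F.
  by case=> [s|t] [s'|t'] //= => [/i_inj -> | /ij_neq | /esym/ij_neq | /j_inj ->].
apply: (inj_card_bij F_inj); rewrite -(card_codom F_inj).
apply/subset_leq_card/subsetP => x _.
by case: (ij_cover x) => /codomP[y ->];
  [apply: (codom_f F (inl y)) | apply: (codom_f F (inr y))].
Qed.

Lemma rack_lambda_decomp (R S T : finRack) : decomposes R S T ->
  ps_iso (ps_add (PermSet (lambda_perm S)) (PermSet (lambda_perm T)))
         (PermSet (lambda_perm R)).
Proof.
case=> i [j [[i_hom i_inj] [j_hom j_inj] ij_disj ij_cover]].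
have ji_cover x : x \in codom j \/ x \in codom i by case: (ij_cover x); [right|left].
have Ei s : component (i s) = i @: component s.
  by apply: component_hom_inj => //; apply: decomposition_lperm_closed ij_cover.
have Ej t : component (j t) = j @: component t.
  apply: component_hom_inj => //; apply: decomposition_lperm_closed ji_cover => //.
  by rewrite disjoint_sym.
have comp_neq s t : component (i s) <> component (j t).
  move=> E; have := mem_component (i s); rewrite E Ej => /imsetP[t' _ Et'].
  by have := disjointFr ij_disj (codom_f i s); rewrite Et' codom_f.
pose r w := match w with inl s => i (component_rep s) | inr t => j (component_rep t) end.
apply: (@ps_iso_lambda _ (ps_add (PermSet _) (PermSet _)) _ r
          (sum_codom_bij i_inj j_inj ij_disj ij_cover)) => [[s|t]|[s|t] [s'|t']|[s|t]] /=.
- by rewrite Ei imset_f ?component_rep_in.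
- by rewrite Ej imset_f ?component_rep_in.
- by rewrite !Ei => /(imset_inj i_inj)/eq_component_rep ->.
- by move/comp_neq.
- by move/esym/comp_neq.
- by rewrite !Ej => /(imset_inj j_inj)/eq_component_rep ->.
- by rewrite permE /= lambda_permE !lpermE i_hom.
- by rewrite permE /= lambda_permE !lpermE j_hom.
Qed.

Lemma rack_lambda_pt : ps_iso (PermSet (lambda_perm pt_rack)) ps_point.
Proof.
exists id; split=> [|u]; first by exists id.
by case: (lambda_perm _ u); case: (ps_perm ps_point u).
Qed.

Lemma rack_lambda_connected (R : finRack) (x : R) :
  connected R -> ps_iso (PermSet (lperm x)) (PermSet (lambda_perm R)).
Proof.
move=> R_conn; apply: (@ps_iso_lambda R (PermSet (lperm x)) id (fun=> x)) => //.
- by exists id.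
- by move=> w; rewrite component_connected ?inE.
Qed.

Lemma ps_count_lperm (R : finRack) (x : R) n :
  ps_count (PermSet (lperm x)) n = (n * lambda_n x n)%N.
Proof.
rewrite /ps_count /cycle_count /lambda_n /=.
set s := lperm x; set P := [set c in porbits s | #|c| == n].
have partP : partition P [set z in setT | #|porbit s z| == n].
  apply/and3P; split.
  - apply/eqP/setP => z; rewrite !inE; apply/bigcupP/idP => [[c]|zn].
      rewrite inE => /andP[/imsetP[w _ ->] wn] zw.
      by have /eqP -> : porbit s z == porbit s w by rewrite eq_porbit_mem.
    by exists (porbit s z); rewrite ?porbit_id // inE imset_f.
  - apply/trivIsetP => _ _ /setIdP[/imsetP[a _ ->] _] /setIdP[/imsetP[b _ ->] _] neq.
    rewrite -setI_eq0; apply/set0Pn => -[z /setIP[za zb]]; case/negP: neq.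
    by rewrite eq_porbit_mem; move: zb; rewrite -eq_porbit_mem => /eqP <-; rewrite porbit_sym.
  - apply/negP; rewrite inE => /andP[/imsetP[w _ E] _].
    by have := porbit_id s w; rewrite -E inE.
rewrite (card_partition partP) (eq_bigr (fun=> n)) => [|c /setIdP[_ /eqP //]].
by rewrite sum_nat_const mulnC.
Qed.

Lemma lambda_n_eq0 (R : finRack) (x : R) n : (#|R| < n)%N -> lambda_n x n = 0%N.
Proof.
move=> R_lt; apply/eqP; rewrite cards_eq0; apply/eqP/setP => c; rewrite !inE.
apply/negbTE/andP => -[/imsetP[w _ ->] /eqP wn].
by have := max_card (mem (porbit (lperm x) w)); rewrite wn leqNgt R_lt.
Qed.

Lemma ps_count_iter_cycle k i n :
  ps_count (iter k (bz_add (bz_c i)) bz_zero).1 n = (k * (if i == n then i else 0))%N /\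
  #|ps_car (iter k (bz_add (bz_c i)) bz_zero).2| = 0%N.
Proof.
elim: k => [|k [IH1 IH2]] /=; first by rewrite ps_count_card0 // card_void.
by rewrite ps_count_add IH1 ps_count_cycle card_sum IH2 card_void.
Qed.

Lemma ps_count_cycle_sum (R : finRack) (x : R) n :
  ps_count (cycle_sum x).1 n = (n * lambda_n x n)%N /\ #|ps_car (cycle_sum x).2| = 0%N.
Proof.
pose F i := if i == n then (n * lambda_n x n)%N else 0%N.
have [-> ->] : ps_count (cycle_sum x).1 n = \sum_(1 <= i < #|R|.+1) F i /\
               #|ps_car (cycle_sum x).2| = 0%N.
  apply: (big_rec2 (fun u m => ps_count u.1 n = m /\ #|ps_car u.2| = 0%N)).
    by rewrite ps_count_card0 // card_void.
  move=> i u m _ [um u2] /=; rewrite ps_count_add um card_sum u2.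
  have [-> ->] := ps_count_iter_cycle (lambda_n x i) i n.
  by rewrite /F; case: eqP => [->|]; rewrite ?muln0 // mulnC.
rewrite -big_mkcond big_const_seq /= count_uniq_mem ?iota_uniq // mem_index_iota.
split=> //; case: (leqP 1 n) => [_|]; last by rewrite ltnS leqn0 => /eqP ->.
case: (ltnP n #|R|.+1) => [_|R_lt] /=; first by rewrite addn0.
by rewrite lambda_n_eq0 // muln0.
Qed.

(** * Products *)

Lemma imset_fst_setX (T1 T2 : finType) (A : {set T1}) (B : {set T2}) b :
  b \in B -> fst @: setX A B = A.
Proof.
move=> bB; apply/setP => a; apply/imsetP/idP => [[[a' b'] /setXP[aA _] ->] //|aA].
by exists (a, b); rewrite ?inE ?aA.
Qed.

Lemma imset_snd_setX (T1 T2 : finType) (A : {set T1}) (B : {set T2}) a :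
  a \in A -> snd @: setX A B = B.
Proof.
move=> aA; apply/setP => b; apply/imsetP/idP => [[[a' b'] /setXP[_ bB] ->] //|bB].
by exists (a, b); rewrite ?inE ?aA.
Qed.

Section Product.
Variables R1 R2 : finRack.
Local Notation P := (prod_rack R1 R2).
Implicit Types (s : {perm R1}) (t : {perm R2}).

Definition pperm s t : {perm P} := perm (prod_fun_inj (@perm_inj _ s) (@perm_inj _ t)).

Lemma ppermE s t (w : P) : pperm s t w = (s w.1, t w.2).
Proof. by rewrite permE. Qed.

Lemma lperm_pair (a : P) : lperm a = pperm (lperm a.1) (lperm a.2).
Proof. by apply/permP => w; rewrite ppermE !lpermE. Qed.

Lemma ppermM s1 s2 t1 t2 : pperm (s1 * s2) (t1 * t2) = pperm s1 t1 * pperm s2 t2.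
Proof. by apply/permP => w; rewrite permM !ppermE !permM. Qed.

Lemma pperm1 : pperm 1 1 = 1.
Proof. by apply/permP => w; rewrite ppermE !perm1 -surjective_pairing. Qed.

Lemma ppermV s t : pperm s^-1 t^-1 = (pperm s t)^-1.
Proof. by apply: (mulgI (pperm s t)); rewrite mulgV -ppermM !mulgV pperm1. Qed.

Lemma pperm_aut s t : s \in rack_aut R1 -> t \in rack_aut R2 -> pperm s t \in rack_aut P.
Proof.
move=> /rack_autP s_hom /rack_autP t_hom.
by apply/rack_autP => a b; rewrite !ppermE /= s_hom t_hom.
Qed.

Lemma component_fst (y z : P) : z \in component y -> z.1 \in component y.1.
Proof.
by move=> zy; apply: (subsetP (@component_hom P R1 fst (fun _ _ => erefl) y)); apply: imset_f.
Qed.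

Lemma component_snd (y z : P) : z \in component y -> z.2 \in component y.2.
Proof.
by move=> zy; apply: (subsetP (@component_hom P R2 snd (fun _ _ => erefl) y)); apply: imset_f.
Qed.

Section Box.
Variables (x1 : R1) (x2 : R2).
Local Notation C1 := (component x1).
Local Notation C2 := (component x2).
Local Notation Q := (setX C1 C2 : {set P}).
Implicit Types (g : {perm R1}) (y z : P).

Lemma box_orbit_sub (y : P) : y \in Q -> orbit 'P (inn Q) y \subset Q.
Proof.
apply: orbit_inn_sub => -[c1 c2] [w1 w2] /setXP[c1C c2C] /setXP[w1C w2C].
by rewrite lperm_pair ppermE inE /= !component_lperm.
Qed.

Lemma box_orbit_fst (y : P) k : y \in Q -> k \in C1 ->
  exists u, ((k, u) : P) \in orbit 'P (inn Q) y.
Proof.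
case: y => y1 y2 /setXP[y1C y2C] kC.
have : k \in fst @: orbit 'P (inn Q) (y1, y2).
  by rewrite -(@orbit_inn_hom P R1 fst) // (imset_fst_setX _ y2C) component_orbitE.
by case/imsetP => -[k' u] kuO /= ->; exists u.
Qed.

Lemma box_orbit_snd (y : P) k : y \in Q -> k \in C2 ->
  exists u, ((u, k) : P) \in orbit 'P (inn Q) y.
Proof.
case: y => y1 y2 /setXP[y1C y2C] kC.
have : k \in snd @: orbit 'P (inn Q) (y1, y2).
  by rewrite -(@orbit_inn_hom P R2 snd) // (imset_snd_setX _ y1C) component_orbitE.
by case/imsetP => -[u k'] kuO /= ->; exists u.
Qed.

Lemma inn_box_orbit_lperm (y : P) v k : y \in Q -> v \in C2 -> k \in C2 ->
  pperm 1 ((lperm (lperm k v))^-1 * lperm v) \in inn (orbit 'P (inn Q) y).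
Proof.
move=> yQ vC kC; have [w wO] := box_orbit_snd yQ vC.
have /setXP[wC _] := subsetP (box_orbit_sub yQ) _ wO.
have wkQ : ((w, k) : P) \in Q by rewrite inE wC kC.
have wvQ : ((w, v) : P) \in Q by rewrite inE wC vC.
(* l_(w,k) (w,v) and l_(w,v) (w,v) lie in the orbit and share their first
   coordinate, and l_(l_v v) = l_v. *)
have lO c : c \in Q -> lperm c (w, v) \in orbit 'P (inn Q) y.
  by move=> cQ; rewrite orbit_perm_act ?lperm_inn.
have := groupM (groupVr (lperm_inn (lO _ wkQ))) (lperm_inn (lO _ wvQ)).
rewrite !lpermE /= !lperm_pair /= -ppermV -ppermM mulVg.
by rewrite -[rk_op v v]lpermE lperm_cycle ?cycle_id ?lpermE.
Qed.

Lemma inn_box_orbit_snd (y : P) u v : y \in Q -> u \in C2 -> v \in C2 ->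
  pperm 1 ((lperm v)^-1 * lperm u) \in inn (orbit 'P (inn Q) y).
Proof.
move=> yQ uC vC; set O := orbit 'P (inn Q) y.
pose S := [set v' in C2 | pperm 1 ((lperm v')^-1 * lperm u) \in inn O].
have S_closed k v' : k \in C2 -> v' \in S -> lperm k v' \in S.
  rewrite !inE => kC /andP[v'C v'O]; rewrite component_lperm //=.
  rewrite (_ : pperm _ _ = pperm 1 ((lperm (lperm k v'))^-1 * lperm v') *
                           pperm 1 ((lperm v')^-1 * lperm u)).
    by rewrite groupM ?inn_box_orbit_lperm.
  by rewrite -ppermM mulg1 -mulgA mulKVg.
have uS : u \in S by rewrite inE uC mulVg pperm1 group1.
have := subsetP (orbit_inn_sub S_closed uS) v; rewrite component_orbitE // => /(_ vC).
by rewrite inE => /andP[].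
Qed.

Lemma component_box (y : P) : y \in Q -> component y = orbit 'P (inn Q) y.
Proof.
move=> yQ; have [y1C y2C] : y.1 \in C1 /\ y.2 \in C2.
  by apply/setXP; rewrite -surjective_pairing.
have comp_sub : component y \subset Q.
  apply/subsetP => z zy; rewrite -(component_eq y1C) -(component_eq y2C) inE.
  by rewrite component_fst ?component_snd.
have inn_sub : inn Q \subset inn (orbit 'P (inn Q) y).
  rewrite gen_subG; apply/subsetP => _ /imsetP[[c1 c2] /setXP[c1C c2C] ->].
  have [u cuO] := box_orbit_fst yQ c1C.
  have /setXP[_ uC] := subsetP (box_orbit_sub yQ) _ cuO.
  have -> : lperm ((c1, c2) : P) = lperm ((c1, u) : P) * pperm 1 ((lperm u)^-1 * lperm c2).
    by rewrite !lperm_pair -ppermM mulg1 mulKVg.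
  by rewrite groupM ?lperm_inn ?inn_box_orbit_snd.
apply/eqP; rewrite eqEsubset sub_component ?andbT ?(imsetS _ inn_sub) //.
by rewrite -{1}component_orbit imsetS ?innS.
Qed.

Lemma component_box_inn (b z : P) h :
  b \in Q -> h \in inn Q -> z \in component b -> h z \in component b.
Proof. by move=> bQ h_inn; rewrite component_box // orbit_perm_act. Qed.

Lemma box_sub_stable (S : {set P}) : ((x1, x2) : P) \in S ->
  (forall a (z : P), a \in C1 -> z \in S -> ((lperm a z.1, z.2) : P) \in S) ->
  (forall b (z : P), b \in C2 -> z \in S -> ((z.1, lperm b z.2) : P) \in S) ->
  Q \subset S.
Proof.
move=> xS S1 S2; apply/subsetP => -[u v] /setXP[uC vC].
have /subsetP S1C : C1 \subset [set u' | ((u', x2) : P) \in S].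
  rewrite -component_orbit; apply: orbit_inn_sub => [a u' aC|]; rewrite !inE //.
  exact: S1 _ (u', x2) aC.
have /subsetP S2C : C2 \subset [set v' | ((u, v') : P) \in S].
  rewrite -component_orbit; apply: orbit_inn_sub => [b v' bC|]; rewrite !inE.
    exact: S2 _ (u, v') bC.
  by have := S1C u uC; rewrite inE.
by have := S2C v vC; rewrite inE.
Qed.

Lemma cycle_box g : g \in <[lperm x1]> -> ((g x1, x2) : P) \in Q.
Proof.
move=> gc; rewrite inE mem_component andbT component_inn ?mem_component //.
by apply: subsetP gc; rewrite cycle_subG lperm_inn ?mem_component.
Qed.

Lemma component_cycle_shift g s (z : P) :
  s \in <[lperm x1]> -> z \in component ((g x1, x2) : P) ->
  pperm s 1 z \in component (((g * s) x1, x2) : P).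
Proof.
move=> sc zc; rewrite (_ : ((g * s) x1, x2) = pperm s 1 (g x1, x2)); last first.
  by rewrite ppermE permM perm1.
rewrite component_aut ?imset_f // pperm_aut ?group1 // (subsetP (inn_aut C1)) //.
by apply: subsetP sc; rewrite cycle_subG lperm_inn ?mem_component.
Qed.

(* Modulo inn Q, which maps each component inside Q onto itself,
   l_a x 1 acts like l_x1 x 1 and 1 x l_b like its inverse. *)
Lemma component_box_lperm_fst g a (z : P) :
  g \in <[lperm x1]> -> a \in C1 -> z \in component ((g x1, x2) : P) ->
  ((lperm a z.1, z.2) : P) \in component (((g * lperm x1) x1, x2) : P).
Proof.
move=> gc aC zc; set h := lperm ((a, x2) : P) * (lperm ((g x1, x2) : P))^-1.
have h_inn : h \in inn Q.
  by rewrite groupM ?groupV ?lperm_inn ?cycle_box // inE aC mem_component.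
have -> : ((lperm a z.1, z.2) : P) = pperm (lperm x1) 1 (h z).
  rewrite permM !lperm_pair (lperm_cycle gc) -ppermV !ppermE /=.
  by rewrite permKV perm1 !permK.
by rewrite component_cycle_shift ?cycle_id ?component_box_inn ?cycle_box.
Qed.

Lemma component_box_lperm_snd g b (z : P) :
  g \in <[lperm x1]> -> b \in C2 -> z \in component ((g x1, x2) : P) ->
  ((z.1, lperm b z.2) : P) \in component (((g * (lperm x1)^-1) x1, x2) : P).
Proof.
move=> gc bC zc.
have h_inn : lperm ((x1, b) : P) \in inn Q by rewrite lperm_inn // inE mem_component.
have -> : ((z.1, lperm b z.2) : P) = pperm (lperm x1)^-1 1 (lperm ((x1, b) : P) z).
  by rewrite lperm_pair !ppermE /= permK perm1.
by rewrite component_cycle_shift ?groupV ?cycle_id ?component_box_inn ?cycle_box.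
Qed.

Lemma box_component_cycle (y : P) :
  y \in Q -> exists2 g, g \in <[lperm x1]> & ((g x1, x2) : P) \in component y.
Proof.
pose S := [set z : P | [exists g in <[lperm x1]>, z \in component ((g x1, x2) : P)]].
have /subsetP QS : Q \subset S.
  apply: box_sub_stable => [|a z aC|b z bC]; rewrite !inE.
  - by apply/exists_inP; exists 1; rewrite ?group1 ?perm1 ?mem_component.
  - case/exists_inP => g gc zc; apply/exists_inP; exists (g * lperm x1).
      by rewrite groupM ?cycle_id.
    exact: component_box_lperm_fst.
  - case/exists_inP => g gc zc; apply/exists_inP; exists (g * (lperm x1)^-1).
      by rewrite groupM ?groupV ?cycle_id.
    exact: component_box_lperm_snd.
move=> /QS; rewrite inE => /exists_inP[g gc /component_eq Eg].
by exists g; rewrite // Eg mem_component.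
Qed.

End Box.

Lemma rack_lambda_prod :
  ps_iso (ps_mul (PermSet (lambda_perm R1)) (PermSet (lambda_perm R2)))
         (PermSet (lambda_perm P)).
Proof.
pose x (y : P) : R1 * R2 := (component_rep y.1, component_rep y.2).
pose g (y : P) :=
  odflt 1 [pick g in <[lperm (x y).1]> | ((g (x y).1, (x y).2) : P) \in component y].
pose r (y : P) : P := (g y (x y).1, (x y).2).
have gP y : g y \in <[lperm (x y).1]> /\ r y \in component y.
  rewrite /r /g; case: pickP => [h /andP[] //|none].
  have yQ : y \in (setX (component (x y).1) (component (x y).2) : {set P}).
    by rewrite inE !(component_eq (component_rep_in _)) !mem_component.
  by have [h hc hy] := box_component_cycle yQ; have := none h; rewrite hc hy.
have r_const (y y' : P) : component y = component y' -> r y = r y'.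
  move=> Ey; have y'y : y' \in component y by rewrite Ey mem_component.
  have Ex : x y' = x y.
    rewrite /x (eq_component_rep (component_eq (component_fst y'y))).
    by rewrite (eq_component_rep (component_eq (component_snd y'y))).
  by rewrite /r /g Ex Ey.
apply: (@ps_iso_lambda P (ps_mul (PermSet _) (PermSet _)) id r) => //.
- by exists id.
- by move=> y; case: (gP y).
- move=> y; rewrite permE /prod_fun /= !lambda_permE lperm_pair /= lperm_cycle ?ppermE //.
  by case: (gP y).
Qed.

End Product.

Theorem proposition6p7 :
  exists lam : finRack -> BZ,
    rack_burnside_ring_hom lam /\
    forall R : finRack, connected R ->
      forall x : R, bz_eq (lam R) (cycle_sum x).
Proof.
exists rack_lambda; split; first split.
- move=> R1 R2 /rack_lambda_iso iso; apply: bz_eq_count => n.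
  by rewrite (ps_count_iso n iso).
- move=> R S T /rack_lambda_decomp iso; apply: bz_eq_count => n /=.
  by rewrite -(ps_count_iso n iso) !ps_count_add ps_count_empty.
- move=> R1 R2; apply: bz_eq_count => n /=.
  rewrite -(ps_count_iso n (rack_lambda_prod R1 R2)) !ps_count_add.
  by rewrite !ps_count_mul0r ps_count_mul0l ps_count_empty !addn0.
- by apply: bz_eq_count => n; rewrite (ps_count_iso n rack_lambda_pt).
- move=> R R_conn x; apply: bz_eq_count => n; have [C1 C2] := ps_count_cycle_sum x n.
  rewrite -(ps_count_iso n (rack_lambda_connected x R_conn)) ps_count_lperm C1.
  by rewrite (ps_count_card0 _ C2) ps_count_empty.
Qed.
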